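(* For any dynamic network game $\mathcal{G}$ considered as a safety game: if Destructor wins the safety game $\mathcal{G}$, then he also has a strict strategy that wins the safety game $\mathcal{G}$.
   Context: Dynamic network games $(G,R)$ are played on networks $G=(V,E,A,S,(P_a)_{a\in\Sigma})$ ($V$ nodes, $E$ undirected edges, $A\subseteq V$ active nodes, $S\subseteq A$ strong nodes, labels given by a partition $(P_a)$ of $V$; weak nodes are those in $A\setminus S$). Destructor and Constructor alternate (Destructor first, either may skip); Destructor deletes one weak node per move, Constructor applies one of her rules from $R$ (relabeling, movement, or creation rules). A network is connected if the subgraph induced by the active nodes is connected. In the safety game the initial network is connected and Constructor wins a play iff all networks in it are connected; she wins the game iff she has a strategy winning all plays consistent with it, otherwise Destructor wins. A Destructor strategy is strict if, whenever it is his turn and the current network contains a weak node, he deletes a node (never skips). *)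

From mathcomp Require Import all_boot.
Set Implicit Arguments.
Unset Strict Implicit.
Unset Printing Implicit Defensive.

(* Networks  G = (V, E, A, S, (P_a)_{a in Sigma}).                      *)
(* Nodes are natural numbers; V is a finite list of nodes; E is an      *)
(* (undirected, i.e. symmetric) edge relation; A the active nodes, S    *)
(* the strong nodes; the partition (P_a) is given by a labelling        *)
(* function  label : nat -> Sigma  (P_a = {v in V | label v = a}).      *)
Record network (Sigma : Type) := Network {
  nodes  : seq nat;
  edge   : rel nat;
  active : pred nat;
  strong : pred nat;
  label  : nat -> Sigma
}.

Definition wf_network (Sigma : Type) (N : network Sigma) : Prop :=
  [/\ uniq (nodes N),
      (forall x y, edge N x y -> (x \in nodes N) && (y \in nodes N)),
      (forall x y, edge N x y = edge N y x),
      (forall x, active N x -> x \in nodes N) &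
      (forall x, strong N x -> active N x)].

Definition is_active (Sigma : Type) (N : network Sigma) (x : nat) : bool :=
  (x \in nodes N) && active N x.

Definition weak (Sigma : Type) (N : network Sigma) (x : nat) : bool :=
  is_active N x && ~~ strong N x.

Definition connected (Sigma : Type) (N : network Sigma) : Prop :=
  forall x y, is_active N x -> is_active N y ->
    exists s : seq nat,
      path (fun a b => edge N a b && is_active N b) x s && (last x s == y).

Definition del (Sigma : Type) (N : network Sigma) (v : nat) : network Sigma :=
  {| nodes  := [seq x <- nodes N | x != v];
     edge   := fun a b => [&& edge N a b, a != v & b != v];
     active := fun a => active N a && (a != v);
     strong := fun a => strong N a && (a != v);
     label  := label N |}.

(* Constructor's rules.  A rule set R is a set of rules of some type     *)
(* Rule, and  apply r N N'  means that applying rule r to network N can  *)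
(* yield N'.  (Relabeling, movement and creation rules are all instances *)

Definition dmove (Sigma : Type) (N N' : network Sigma) : Prop :=
  N' = N \/ exists v, weak N v /\ N' = del N v.

Definition cmove (Sigma Rule : Type) (apply : Rule -> network Sigma -> network Sigma -> Prop)
  (R : Rule -> Prop) (N N' : network Sigma) : Prop :=
  N' = N \/ exists r, R r /\ apply r N N'.

(* Plays are infinite sequences p : nat -> network; p (2k) is the network
   when Destructor is to move, p (2k+1) when Constructor is to move.
   The history up to position n is [:: p 0; ...; p n]. *)
Definition hist (Sigma : Type) (p : nat -> network Sigma) (n : nat) : seq (network Sigma) :=
  map p (iota 0 n.+1).

Definition dstrategy (Sigma : Type) := seq (network Sigma) -> option nat.  (* None = skip, Some v = delete v *)
Definition cstrategy (Sigma : Type) := seq (network Sigma) -> network Sigma.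

Definition dresult (Sigma : Type) (N : network Sigma) (o : option nat) : network Sigma :=
  if o is Some v then del N v else N.

Definition dlegal (Sigma : Type) (sigma : dstrategy Sigma) : Prop :=
  forall h N v, sigma (rcons h N) = Some v -> weak N v.

Definition dstrict (Sigma : Type) (sigma : dstrategy Sigma) : Prop :=
  forall h N, (exists v, weak N v) -> sigma (rcons h N) <> None.

Definition clegal (Sigma Rule : Type) (apply : Rule -> network Sigma -> network Sigma -> Prop)
  (R : Rule -> Prop) (tau : cstrategy Sigma) : Prop :=
  forall h N, cmove apply R N (tau (rcons h N)).

Definition dplay (Sigma Rule : Type) (apply : Rule -> network Sigma -> network Sigma -> Prop)
  (R : Rule -> Prop) (N0 : network Sigma) (sigma : dstrategy Sigma)
  (p : nat -> network Sigma) : Prop :=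
  p 0 = N0 /\
  forall k, p k.*2.+1 = dresult (p k.*2) (sigma (hist p k.*2)) /\
            cmove apply R (p k.*2.+1) (p k.*2.+2).

Definition cplay (Sigma Rule : Type) (apply : Rule -> network Sigma -> network Sigma -> Prop)
  (R : Rule -> Prop) (N0 : network Sigma) (tau : cstrategy Sigma)
  (p : nat -> network Sigma) : Prop :=
  p 0 = N0 /\
  forall k, dmove (p k.*2) (p k.*2.+1) /\ p k.*2.+2 = tau (hist p k.*2.+1).

Definition constructor_wins_safety (Sigma Rule : Type)
  (apply : Rule -> network Sigma -> network Sigma -> Prop)
  (R : Rule -> Prop) (N0 : network Sigma) : Prop :=
  exists tau : cstrategy Sigma, clegal apply R tau /\
    forall p, cplay apply R N0 tau p -> forall i, connected (p i).

Definition destructor_wins_safety (Sigma Rule : Type)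
  (apply : Rule -> network Sigma -> network Sigma -> Prop)
  (R : Rule -> Prop) (N0 : network Sigma) : Prop :=
  ~ constructor_wins_safety apply R N0.

Definition dstrategy_wins_safety (Sigma Rule : Type)
  (apply : Rule -> network Sigma -> network Sigma -> Prop)
  (R : Rule -> Prop) (N0 : network Sigma) (sigma : dstrategy Sigma) : Prop :=
  dlegal sigma /\
  forall p, dplay apply R N0 sigma p -> exists i, ~ connected (p i).

(* The proof is a determinacy argument through an attractor.  A network N
   lies in the *strict attractor* when either N is disconnected, or
   Destructor has a strict move (delete a weak node, or skip when no weak
   node exists) after which every connected answer of Constructor lands in
   the attractor again.  Membership is witnessed by a well-founded tree of
   such moves (a Type-valued inductive, so that strategies can read it).

   - If N0 has such a tree, Destructor plays strictly by walking down the
     tree along the play; well-foundedness of the tree forces every play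
     to reach a disconnected network ([follow_strategy_wins]).
   - If N0 has none, Constructor wins by always moving to a network
     outside the attractor: outside networks are connected, every strict
     Destructor move keeps a connected network with an escaping answer,
     and a (non-strict) skip is answered by a skip
     ([outside_attractor_constructor_wins]).
   Since Destructor wins, the second case is impossible, which proves
   [mainTheorem2]. *)

From Stdlib Require Import Classical ClassicalEpsilon.
From mathcomp Require Import all_boot zify.

Set Implicit Arguments.
Unset Strict Implicit.
Unset Printing Implicit Defensive.

Definition dec (P : Prop) : {P} + {~ P} := excluded_middle_informative P.

Section Histories.
Variable Sigma : Type.
Implicit Types (p : nat -> network Sigma) (N : network Sigma).

Lemma size_hist p n : size (hist p n) = n.+1.
Proof. by rewrite /hist size_map size_iota. Qed.

Lemma nth_hist p N n i : i <= n -> nth N (hist p n) i = p i.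
Proof. by move=> le_in; rewrite /hist (nth_map 0) ?size_iota ?nth_iota //; lia. Qed.

Lemma last_hist p N n : last N (hist p n) = p n.
Proof. by rewrite (last_nth N) size_hist /= nth_hist. Qed.

End Histories.

Section StrictMoves.
Variable Sigma : Type.
Implicit Types (N : network Sigma) (o : option nat).

Definition strict_move N o : Prop :=
  if o is Some v then weak N v else ~ exists v, weak N v.

Definition default_move N : option nat :=
  match dec (exists v, weak N v) with
  | left has_weak => Some (proj1_sig (constructive_indefinite_description _ has_weak))
  | right _ => None
  end.

Lemma default_moveP N : strict_move N (default_move N).
Proof.
rewrite /default_move; case: dec => [has_weak|//].
exact: (proj2_sig (constructive_indefinite_description _ has_weak)).
Qed.

Lemma strict_move_strategy (sigma : dstrategy Sigma) :
  (forall h N, strict_move N (sigma (rcons h N))) -> dstrict sigma /\ dlegal sigma.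
Proof.
move=> sigma_strict; split=> [h N [v weak_v] | h N v sigma_v].
- by move: (sigma_strict h N); case: (sigma _) => // no_weak _; apply: no_weak; exists v.
- by move: (sigma_strict h N); rewrite sigma_v.
Qed.

End StrictMoves.

Section Attractor.
Variables (Sigma Rule : Type) (apply : Rule -> network Sigma -> network Sigma -> Prop).
Variable R : Rule -> Prop.
Implicit Types (N : network Sigma) (o : option nat).

Inductive attractor : network Sigma -> Type :=
| att_lost N : ~ connected N -> attractor N
| att_move N o : strict_move N o ->
    (connected (dresult N o) ->
     forall N'', cmove apply R (dresult N o) N'' -> attractor N'') ->
    attractor N.

(* A position of Destructor's tree-walk: the current subtree, or None once
   the history has left the tree (which never happens along a real play). *)
Definition position : Type := option {N : network Sigma & attractor N}.

Definition tree_move (t : position) : option nat :=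
  if t is Some (existT _ (att_move _ o _ _)) then o else None.

Definition advance (t : position) (b : network Sigma) : position :=
  match t with
  | Some (existT _ (att_move N o _ next)) =>
      match dec (connected (dresult N o) /\ cmove apply R (dresult N o) b) with
      | left H => Some (existT _ b (next (proj1 H) b (proj2 H)))
      | right _ => None
      end
  | _ => None
  end.

Fixpoint track (t0 : position) (q : nat -> network Sigma) (j : nat) : position :=
  if j is j'.+1 then advance (track t0 q j') (q j'.*2.+2) else t0.

Lemma track_ext t0 q q' j :
  (forall i, i <= j.*2 -> q i = q' i) -> track t0 q j = track t0 q' j.
Proof.
elim: j => [//|j IH] eq_qq' /=.
by rewrite IH => [|i le_i]; rewrite eq_qq' //; lia.
Qed.

Definition follow_strategy N0 (t0 : attractor N0) : dstrategy Sigma :=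
  fun h =>
    let N := last N0 h in
    let o := tree_move (track (Some (existT _ N0 t0)) (nth N0 h) (size h).-1./2) in
    match dec (strict_move N o) with left _ => o | right _ => default_move N end.

Lemma follow_strategy_strict N0 (t0 : attractor N0) :
  dstrict (follow_strategy t0) /\ dlegal (follow_strategy t0).
Proof.
apply: strict_move_strategy => h N.
rewrite /follow_strategy last_rcons; case: dec => [//|_]; exact: default_moveP.
Qed.

Lemma follow_strategy_hist N0 (t0 : attractor N0) p k :
  let o := tree_move (track (Some (existT _ N0 t0)) p k) in
  follow_strategy t0 (hist p k.*2) =
    match dec (strict_move (p k.*2) o) with
    | left _ => o
    | right _ => default_move (p k.*2)
    end.
Proof.
rewrite /follow_strategy size_hist last_hist /= doubleK.
by rewrite (@track_ext _ _ p) // => i le_i; rewrite nth_hist.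
Qed.

Lemma follow_strategy_wins N0 (t0 : attractor N0) :
  dstrategy_wins_safety apply R N0 (follow_strategy t0).
Proof.
split; first by case: (follow_strategy_strict t0).
move=> p [p0 play_p]; apply: NNPP => no_loss.
have conn i : connected (p i) by apply: NNPP => nconn; apply: no_loss; exists i.
suff walk : forall N (t : attractor N) j,
    track (Some (existT _ N0 t0)) p j = Some (existT _ N t) -> N = p j.*2 -> False.
  by apply: (walk _ t0 0).
move=> N t; elim: N / t => [N nconn | N o strict_o next IH] j track_j N_j.
  by apply: (nconn); rewrite N_j.
have [dstep cstep] := play_p j.
have dstep_o : p j.*2.+1 = dresult N o.
  by rewrite dstep follow_strategy_hist track_j /=; case: dec => //; rewrite -N_j.
rewrite dstep_o in cstep.
have [H track_Sj] : exists H : connected (dresult N o) /\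
                               cmove apply R (dresult N o) (p j.*2.+2),
    track (Some (existT _ N0 t0)) p j.+1 =
      Some (existT _ _ (next (proj1 H) _ (proj2 H))).
  rewrite /= track_j /=; case: dec => [H | noH]; first by exists H.
  by case: noH; split; rewrite // -dstep_o.
by apply: (IH (proj1 H) _ (proj2 H) j.+1 track_Sj); rewrite doubleS.
Qed.

Definition outside N : Prop := ~ inhabited (attractor N).

Lemma outside_connected N : outside N -> connected N.
Proof. by move=> out_N; apply: NNPP => nconn; apply: out_N; constructor; exact: att_lost. Qed.

Lemma outside_strict_move N o :
  outside N -> strict_move N o ->
  connected (dresult N o) /\
  exists N'', cmove apply R (dresult N o) N'' /\ outside N''.
Proof.
move=> out_N strict_o.
have conn : connected (dresult N o).
  apply: NNPP => nconn; apply: out_N; constructor.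
  by apply: (att_move strict_o) => /nconn.
split=> //; apply: NNPP => no_escape; apply: out_N; constructor.
apply: (att_move strict_o) => _ N'' move_N''.
have in_att : inhabited (attractor N'').
  by apply: NNPP => out_N''; apply: no_escape; exists N''.
exact: (epsilon in_att (fun=> True)).
Qed.

Lemma outside_destructor_move N N' :
  outside N -> dmove N N' ->
  connected N' /\ exists N'', cmove apply R N' N'' /\ outside N''.
Proof.
move=> out_N [->|[v [weak_v ->]]]; last exact: (@outside_strict_move _ (Some v)).
by split; [exact: outside_connected | exists N; split => //; left].
Qed.

Definition escape_strategy N0 : cstrategy Sigma :=
  fun h =>
    let N := last N0 h in
    match dec (exists N'', cmove apply R N N'' /\ outside N'') with
    | left H => proj1_sig (constructive_indefinite_description _ H)
    | right _ => N
    end.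

Lemma escape_strategyP N0 h :
  let N := last N0 h in
  cmove apply R N (escape_strategy N0 h) /\
  ((exists N'', cmove apply R N N'' /\ outside N'') -> outside (escape_strategy N0 h)).
Proof.
rewrite /escape_strategy; case: dec => [H | noH]; last by split; [left | move/noH].
by have [move_N out_N] := proj2_sig (constructive_indefinite_description _ H).
Qed.

Lemma outside_attractor_constructor_wins N0 :
  outside N0 -> constructor_wins_safety apply R N0.
Proof.
move=> out_N0; exists (escape_strategy N0); split.
  by move=> h N; have [] := escape_strategyP N0 (rcons h N); rewrite last_rcons.
move=> p [p0 play_p].
have dstep_safe k : outside (p k.*2) ->
    connected (p k.*2.+1) /\ exists N'', cmove apply R (p k.*2.+1) N'' /\ outside N''.
  by move/outside_destructor_move; apply; exact: (play_p k).1.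
have out_even k : outside (p k.*2).
  elim: k => [|k IH]; first by rewrite p0.
  have [_ cstep] := play_p k; have [_ can_escape] := dstep_safe k IH.
  have [_ escapes] := escape_strategyP N0 (hist p k.*2.+1).
  by rewrite doubleS cstep; apply: escapes; rewrite last_hist.
move=> i; rewrite -[i](odd_double_half i); case: (odd i) => /=.
  by rewrite add1n; case: (dstep_safe _ (out_even i./2)).
by rewrite add0n; apply: outside_connected.
Qed.

End Attractor.

Theorem mainTheorem2 (Sigma Rule : Type)
  (apply : Rule -> network Sigma -> network Sigma -> Prop)
  (R : Rule -> Prop) (N0 : network Sigma) :
  wf_network N0 -> connected N0 ->
  destructor_wins_safety apply R N0 ->
  exists sigma : dstrategy Sigma,
    dstrict sigma /\ dstrategy_wins_safety apply R N0 sigma.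
Proof.
move=> _ _ destructor_wins.
have [[t0] | out_N0] := classic (inhabited (attractor apply R N0)).
  exists (follow_strategy t0); split; last exact: follow_strategy_wins.
  by case: (follow_strategy_strict t0).
by case: destructor_wins; exact: outside_attractor_constructor_wins.
Qed.
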